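(* Let $\mathcal A$ be the non-associative algebra whose atoms are $e,e',a,\breve a$, with identity $1'=e+e'$, $e,e'$ self-converse, $a$ and $\breve a$ converses of each other, and composition of atoms given by: $e;e=e$, $e;e'=0$, $e;a=a$, $e;\breve a=0$; $e';e=0$, $e';e'=e'$, $e';a=0$, $e';\breve a=\breve a$; $a;e=0$, $a;e'=a$, $a;a=a$, $a;\breve a=a+\breve a+e$; $\breve a;e=\breve a$, $\breve a;e'=0$, $\breve a;a=a+\breve a+e'$, $\breve a;\breve a=\breve a$ (extended to all elements by additivity; $\mathcal A$ is the complex algebra of this atom structure). Then $\mathcal A$ is a non-associative algebra which is not associative, has a feeble representation (e.g. over the base $\{0,1\}$ with $e\mapsto\{(0,0)\}$, $e'\mapsto\{(1,1)\}$, $a\mapsto\{(0,1)\}$, $\breve a\mapsto\{(1,0)\}$), but has no qualitative representation.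
   Context: A non-associative algebra is an algebra $(A,0,1,+,-,1',\breve{\ },;)$ such that $(A,0,1,+,-)$ is a boolean algebra (with $x\cdot y=-(-x+-y)$, $x\le y\iff x+y=y$); $1';x=x=x;1'$, $\breve{\breve x}=x$, $(x;y)\breve{}=\breve y;\breve x$; $\breve 0=x;0=0$, $(x+y)\breve{}=\breve x+\breve y$, $x;(y+z)=x;y+x;z$; and the Peircean law: $x;y\cdot\breve z=0$ iff $y;z\cdot\breve x=0$. For a map $\phi:A\to\wp(D\times D)$ consider the conditions: $\phi$ injective, $0^\phi=\varnothing$, $1^\phi=D\times D$, $(1')^\phi=\{(x,x):x\in D\}$, $(a+b)^\phi=a^\phi\cup b^\phi$, $(-a)^\phi=(D\times D)\setminus a^\phi$, $(\breve a)^\phi=\{(y,x):(x,y)\in a^\phi\}$. Such $\phi$ is a feeble representation if also $(a;b)^\phi\supseteq a^\phi\circ b^\phi$ for all $a,b$, and a qualitative representation if also $c^\phi\supseteq a^\phi\circ b^\phi\iff c\ge a;b$ for all $a,b,c$ ($\circ$ is relational composition). *)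

From HB Require Import structures.
From mathcomp Require Import all_boot.
Set Implicit Arguments. Unset Strict Implicit. Unset Printing Implicit Defensive.

Section NA.
Variables (A : Type) (zero one : A) (plus : A -> A -> A) (neg : A -> A)
          (ident : A) (conv : A -> A) (comp : A -> A -> A).

Definition meet (x y : A) : A := neg (plus (neg x) (neg y)).
Definition leA (x y : A) : Prop := plus x y = y.

Definition is_boolean_algebra : Prop :=
  (forall x y, plus x y = plus y x) /\
      (forall x y z, plus x (plus y z) = plus (plus x y) z) /\
      (forall x y, meet x y = meet y x) /\
      (forall x y z, meet x (meet y z) = meet (meet x y) z) /\
      (forall x y, plus x (meet x y) = x) /\
      (forall x y, meet x (plus x y) = x) /\
      (forall x y z, plus x (meet y z) = meet (plus x y) (plus x z)) /\
      (forall x, plus x zero = x /\ meet x one = x) /\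
      (forall x, plus x (neg x) = one /\ meet x (neg x) = zero).

Definition is_NA : Prop :=
  is_boolean_algebra /\
      (forall x, comp ident x = x /\ comp x ident = x) /\
      (forall x, conv (conv x) = x) /\
      (forall x y, conv (comp x y) = comp (conv y) (conv x)) /\
      (forall x, conv zero = zero /\ comp x zero = zero) /\
      (forall x y, conv (plus x y) = plus (conv x) (conv y)) /\
      (forall x y z, comp x (plus y z) = plus (comp x y) (comp x z)) /\
      (forall x y z, meet (comp x y) (conv z) = zero <->
                     meet (comp y z) (conv x) = zero).

Definition is_associative : Prop :=
  forall x y z, comp x (comp y z) = comp (comp x y) z.

Definition relcomp (D : Type) (R S : D -> D -> Prop) : D -> D -> Prop :=
  fun x z => exists y, R x y /\ S y z.

Definition is_proper_map (D : Type) (phi : A -> D -> D -> Prop) : Prop :=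
  (forall a b, (forall x y, phi a x y <-> phi b x y) -> a = b) /\
      (forall x y, ~ phi zero x y) /\
      (forall x y, phi one x y) /\
      (forall x y, phi ident x y <-> x = y) /\
      (forall a b x y, phi (plus a b) x y <-> (phi a x y \/ phi b x y)) /\
      (forall a x y, phi (neg a) x y <-> ~ phi a x y) /\
      (forall a x y, phi (conv a) x y <-> phi a y x).

Definition feeble_representation (D : Type) (phi : A -> D -> D -> Prop) : Prop :=
  is_proper_map phi /\
  (forall a b x z, relcomp (phi a) (phi b) x z -> phi (comp a b) x z).

Definition qualitative_representation (D : Type) (phi : A -> D -> D -> Prop) : Prop :=
  is_proper_map phi /\
  (forall a b c, (forall x z, relcomp (phi a) (phi b) x z -> phi c x z)
                 <-> leA (comp a b) c).

End NA.

Inductive atom := At_e | At_e' | At_a | At_ca.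

Definition atom_to_ord (x : atom) : 'I_4 :=
  match x with
  | At_e => inord 0 | At_e' => inord 1 | At_a => inord 2 | At_ca => inord 3
  end.
Definition ord_to_atom (i : 'I_4) : atom :=
  match val i with 0 => At_e | 1 => At_e' | 2 => At_a | _ => At_ca end.
Lemma atom_ordK : cancel atom_to_ord ord_to_atom.
Proof. by case; rewrite /ord_to_atom /= inordK. Qed.

HB.instance Definition _ := Finite.copy atom (can_type atom_ordK).

Definition atom_conv (x : atom) : atom :=
  match x with At_e => At_e | At_e' => At_e' | At_a => At_ca | At_ca => At_a end.

Definition atom_comp (x y : atom) : {set atom} :=
  match x, y with
  | At_e, At_e => [set At_e]
  | At_e, At_e' => set0
  | At_e, At_a => [set At_a]
  | At_e, At_ca => set0
  | At_e', At_e => set0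
  | At_e', At_e' => [set At_e']
  | At_e', At_a => set0
  | At_e', At_ca => [set At_ca]
  | At_a, At_e => set0
  | At_a, At_e' => [set At_a]
  | At_a, At_a => [set At_a]
  | At_a, At_ca => [set At_a; At_ca; At_e]
  | At_ca, At_e => [set At_ca]
  | At_ca, At_e' => set0
  | At_ca, At_a => [set At_a; At_ca; At_e']
  | At_ca, At_ca => [set At_ca]
  end.

Definition Alg := {set atom}.
Definition A_zero : Alg := set0.
Definition A_one : Alg := setT.
Definition A_plus (X Y : Alg) : Alg := X :|: Y.
Definition A_neg (X : Alg) : Alg := ~: X.
Definition A_ident : Alg := [set At_e; At_e'].
Definition A_conv (X : Alg) : Alg := [set atom_conv x | x in X].
Definition A_comp (X Y : Alg) : Alg :=
  \bigcup_(x in X) \bigcup_(y in Y) atom_comp x y.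

(* The complex algebra of an atom structure is a non-associative algebra as
   soon as conversion and the composition table obey the Peircean triangle
   law at the level of atoms, so the algebraic claims reduce to a finite check
   on the sixteen table entries.  Labelling each pair (x, y) of points of
   {0, 1} by the atom containing it (e, a, a-converse, e') is compatible with
   the table, which gives a feeble representation.  A qualitative
   representation, however, must realise a;a <> 0 by some path x -a-> y -a-> z,
   which is impossible: the identity pair (y, y) lies in e or in e', and
   a;e = 0 = e';a. *)

From mathcomp Require Import all_boot.
Set Implicit Arguments. Unset Strict Implicit. Unset Printing Implicit Defensive.

Section Qualitative.
Variables (A : Type) (zero one : A) (plus : A -> A -> A) (neg : A -> A)
          (ident : A) (conv : A -> A) (comp : A -> A -> A).
Variables (D : Type) (phi : A -> D -> D -> Prop).

Lemma qualitative_relcomp_empty :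
  qualitative_representation zero one plus neg ident conv comp phi ->
  forall a b, (forall x z, ~ relcomp (phi a) (phi b) x z) <-> leA plus (comp a b) zero.
Proof.
case=> [[_ [phi0 _]] qual] a b; split=> [ab0 | /qual ab0 x z /ab0 /phi0 //].
by apply/qual => x z /ab0.
Qed.

End Qualitative.

Section ComplexAlgebra.
Variables (T : finType) (cv : T -> T) (tbl : T -> T -> {set T}) (I : {set T}).

Definition cplx_conv (X : {set T}) : {set T} := [set cv x | x in X].
Definition cplx_comp (X Y : {set T}) : {set T} :=
  \bigcup_(x in X) \bigcup_(y in Y) tbl x y.

Lemma meet_setE (X Y : {set T}) : meet (@setU T) (@setC T) X Y = X :&: Y.
Proof. by rewrite /meet setCU !setCK. Qed.

Lemma setU_boolean_algebra : is_boolean_algebra set0 setT (@setU T) (@setC T).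
Proof.
rewrite /is_boolean_algebra; do ?split=> *; rewrite ?meet_setE.
- exact: setUC.
- exact: setUA.
- exact: setIC.
- exact: setIA.
- by rewrite setIC setKI.
- by rewrite setUC setKU.
- exact: setUIr.
- exact: setU0.
- exact: setIT.
- exact: setUCr.
- exact: setICr.
Qed.

Lemma cplx_compP (X Y : {set T}) x :
  reflect (exists a b, [/\ a \in X, b \in Y & x \in tbl a b]) (x \in cplx_comp X Y).
Proof.
apply: (iffP bigcupP) => [[a Xa /bigcupP [b Yb tbl_x]] | [a [b [Xa Yb tbl_x]]]].
  by exists a, b.
by exists a => //; apply/bigcupP; exists b.
Qed.

Lemma cplx_comp_set1 a b : cplx_comp [set a] [set b] = tbl a b.
Proof. by rewrite /cplx_comp !big_set1. Qed.

Hypothesis cvK : involutive cv.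

Lemma mem_cplx_conv (X : {set T}) x : (x \in cplx_conv X) = (cv x \in X).
Proof.
apply/imsetP/idP => [[y Xy ->] | Xcx]; first by rewrite cvK.
by exists (cv x); rewrite ?cvK.
Qed.

Lemma cplx_convK : involutive cplx_conv.
Proof. by move=> X; apply/setP => x; rewrite !mem_cplx_conv cvK. Qed.

Lemma cplx_conv0 : cplx_conv set0 = set0.
Proof. exact: imset0. Qed.

Lemma cplx_convU (X Y : {set T}) : cplx_conv (X :|: Y) = cplx_conv X :|: cplx_conv Y.
Proof. exact: imsetU. Qed.

Lemma cplx_comp0 (X : {set T}) : cplx_comp X set0 = set0.
Proof. by apply/setP => x; rewrite inE; apply/cplx_compP => -[a [b [_]]]; rewrite inE. Qed.

Lemma cplx_compUr (X Y Z : {set T}) :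
  cplx_comp X (Y :|: Z) = cplx_comp X Y :|: cplx_comp X Z.
Proof.
apply/setP => x; rewrite inE; apply/cplx_compP/orP.
- case=> a [b [Xa /setUP [Yb | Zb] tbl_x]]; [left | right];
    by apply/cplx_compP; exists a, b.
- by case=> /cplx_compP [a [b [Xa YZb tbl_x]]]; exists a, b; rewrite inE YZb ?orbT.
Qed.

Hypothesis tbl_conv : forall a b x, (cv x \in tbl a b) = (x \in tbl (cv b) (cv a)).

Lemma cplx_conv_comp (X Y : {set T}) :
  cplx_conv (cplx_comp X Y) = cplx_comp (cplx_conv Y) (cplx_conv X).
Proof.
apply/setP => x; rewrite mem_cplx_conv; apply/cplx_compP/cplx_compP.
- case=> a [b [Xa Yb tbl_x]]; exists (cv b), (cv a).
  by rewrite !mem_cplx_conv !cvK; split=> //; rewrite -tbl_conv.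
- case=> b [a [Yb Xa tbl_x]]; exists (cv a), (cv b).
  by rewrite tbl_conv !cvK -!mem_cplx_conv.
Qed.

Hypothesis tbl_peirce : forall a b c, cv a \in tbl b c -> cv c \in tbl a b.

Lemma cplx_peirce (X Y Z : {set T}) :
  cplx_comp X Y :&: cplx_conv Z = set0 -> cplx_comp Y Z :&: cplx_conv X = set0.
Proof.
move=> XYZ0; apply/setP => x; rewrite inE [in RHS]inE mem_cplx_conv.
apply/andP => -[/cplx_compP [b [c [Yb Zc tbl_x]]] Xcx].
have XY_cc : cv c \in cplx_comp X Y.
  by apply/cplx_compP; exists (cv x), b; split=> //; apply: tbl_peirce; rewrite cvK.
have : cv c \in cplx_comp X Y :&: cplx_conv Z by rewrite inE XY_cc mem_cplx_conv cvK.
by rewrite XYZ0 inE.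
Qed.

Hypothesis tbl_unitl : forall i b x, i \in I -> x \in tbl i b -> x = b.
Hypothesis tbl_unitl_ex : forall b, exists2 i, i \in I & b \in tbl i b.
Hypothesis tbl_unitr : forall a i x, i \in I -> x \in tbl a i -> x = a.
Hypothesis tbl_unitr_ex : forall a, exists2 i, i \in I & a \in tbl a i.

Lemma cplx_comp1l (X : {set T}) : cplx_comp I X = X.
Proof.
apply/setP => x; apply/cplx_compP/idP => [[i [b [Ii Xb tbl_x]]] | Xx].
  by rewrite (tbl_unitl Ii tbl_x).
by have [i Ii tbl_x] := tbl_unitl_ex x; exists i, x.
Qed.

Lemma cplx_comp1r (X : {set T}) : cplx_comp X I = X.
Proof.
apply/setP => x; apply/cplx_compP/idP => [[a [i [Xa Ii tbl_x]]] | Xx].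
  by rewrite (tbl_unitr Ii tbl_x).
by have [i Ii tbl_x] := tbl_unitr_ex x; exists x, i.
Qed.

Theorem cplx_is_NA :
  is_NA set0 setT (@setU T) (@setC T) I cplx_conv cplx_comp.
Proof.
split; first exact: setU_boolean_algebra.
split; first by move=> X; rewrite cplx_comp1l cplx_comp1r.
split; first exact: cplx_convK.
split; first exact: cplx_conv_comp.
split; first by move=> X; rewrite cplx_conv0 cplx_comp0.
split; first exact: cplx_convU.
split; first exact: cplx_compUr.
move=> X Y Z; rewrite !meet_setE; split; first exact: cplx_peirce.
by move=> /cplx_peirce /cplx_peirce.
Qed.

Variables (D : Type) (lab : D -> D -> T).
Hypothesis lab_surj : forall t, exists x y, lab x y = t.
Hypothesis lab_ident : forall x y, lab x y \in I <-> x = y.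
Hypothesis lab_conv : forall x y, cv (lab x y) = lab y x.
Hypothesis lab_comp : forall x y z, lab x z \in tbl (lab x y) (lab y z).

Definition label_rep (X : {set T}) (x y : D) : Prop := lab x y \in X.

Lemma label_rep_feeble :
  feeble_representation set0 setT (@setU T) (@setC T) I cplx_conv cplx_comp label_rep.
Proof.
rewrite /label_rep; split; last first.
  by move=> X Y x z [y [Xxy Yyz]]; apply/cplx_compP; exists (lab x y), (lab y z).
split.
  move=> X Y XY; apply/setP => t.
  by have [x [y <-]] := lab_surj t; apply/idP/idP => /XY.
split; first by move=> x y; rewrite inE.
split; first by move=> x y; rewrite inE.
split; first exact: lab_ident.
split; first by move=> X Y x y; rewrite inE; split=> /orP.
split; first by move=> X x y; rewrite inE; split=> /negP.
by move=> X x y; rewrite mem_cplx_conv lab_conv.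
Qed.

End ComplexAlgebra.

(* The equality of [atom] is transported from ['I_4] and does not compute. *)
Lemma eq_atomE (x y : atom) : (x == y) = match x, y with
  | At_e, At_e | At_e', At_e' | At_a, At_a | At_ca, At_ca => true
  | _, _ => false end.
Proof. by apply/eqP/idP => [-> | ]; [case: y | case: x; case: y]. Qed.

Lemma atom_convK : involutive atom_conv.
Proof. by case. Qed.

Lemma atom_comp_conv a b x :
  (atom_conv x \in atom_comp a b) = (x \in atom_comp (atom_conv b) (atom_conv a)).
Proof. by move: a b x; do 3!case; rewrite ?inE ?eq_atomE. Qed.

Lemma atom_comp_peirce a b c :
  atom_conv a \in atom_comp b c -> atom_conv c \in atom_comp a b.
Proof. by move: a b c; do 3!case; rewrite ?inE ?eq_atomE. Qed.

Lemma atom_comp_unitl i b x : i \in A_ident -> x \in atom_comp i b -> x = b.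
Proof. by move: i b x; do 3!case; rewrite ?inE ?eq_atomE. Qed.

Lemma atom_comp_unitl_ex b : exists2 i, i \in A_ident & b \in atom_comp i b.
Proof.
by case: b; [exists At_e | exists At_e' | exists At_e | exists At_e'];
  rewrite ?inE ?eq_atomE.
Qed.

Lemma atom_comp_unitr a i x : i \in A_ident -> x \in atom_comp a i -> x = a.
Proof. by move: a i x; do 3!case; rewrite ?inE ?eq_atomE. Qed.

Lemma atom_comp_unitr_ex a : exists2 i, i \in A_ident & a \in atom_comp a i.
Proof.
by case: a; [exists At_e | exists At_e' | exists At_e' | exists At_e];
  rewrite ?inE ?eq_atomE.
Qed.

Lemma A_is_NA : is_NA A_zero A_one A_plus A_neg A_ident A_conv A_comp.
Proof.
exact: (cplx_is_NA atom_convK atom_comp_conv atom_comp_peirce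
          atom_comp_unitl atom_comp_unitl_ex atom_comp_unitr atom_comp_unitr_ex).
Qed.

Lemma A_comp_set1 a b : A_comp [set a] [set b] = atom_comp a b.
Proof. exact: cplx_comp_set1. Qed.

Lemma A_not_associative : ~ is_associative A_comp.
Proof.
move=> /(_ [set At_a] [set At_ca] [set At_a]) /setP /(_ At_e).
rewrite !A_comp_set1.
have -> : At_e \in A_comp [set At_a] (atom_comp At_ca At_a).
  by apply/cplx_compP; exists At_a, At_ca; rewrite !inE !eq_atomE.
move/esym/cplx_compP => [x [y [x_aca /set1P -> e_xa]]].
by move: x x_aca e_xa; case; rewrite !inE !eq_atomE.
Qed.

Definition bool_atom (x y : bool) : atom :=
  match x, y with
  | false, false => At_e | true, true => At_e'
  | false, true => At_a | true, false => At_ca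
  end.

Lemma A_feeble_rep :
  feeble_representation A_zero A_one A_plus A_neg A_ident A_conv A_comp
    (label_rep bool_atom).
Proof.
apply: (label_rep_feeble atom_convK).
- by case; [exists false, false | exists true, true | exists false, true | exists true, false].
- by do 2!case; rewrite !inE !eq_atomE.
- by do 2!case.
- by do 3!case; rewrite !inE !eq_atomE.
Qed.

Lemma A_no_qualitative_rep (D : Type) (phi : Alg -> D -> D -> Prop) :
  ~ qualitative_representation A_zero A_one A_plus A_neg A_ident A_conv A_comp phi.
Proof.
move=> qual; have [[_ [_ [_ [phi_ident [phiU _]]]]] _] := qual.
have relcomp_empty := qualitative_relcomp_empty qual.
have a_e : forall x y, ~ relcomp (phi [set At_a]) (phi [set At_e]) x y.
  by apply/relcomp_empty; rewrite /leA A_comp_set1 /A_plus setU0.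
have e'_a : forall x y, ~ relcomp (phi [set At_e']) (phi [set At_a]) x y.
  by apply/relcomp_empty; rewrite /leA A_comp_set1 /A_plus setU0.
have a_a : forall x z, ~ relcomp (phi [set At_a]) (phi [set At_a]) x z.
  move=> x z [y [xy yz]].
  have /phiU [ye | ye'] : phi (A_plus [set At_e] [set At_e']) y y by apply/phi_ident.
  - by apply: (a_e x y); exists y.
  - by apply: (e'_a y z); exists y.
move/relcomp_empty: a_a; rewrite /leA A_comp_set1 /A_plus setU0 => /setP /(_ At_a).
by rewrite !inE eq_atomE.
Qed.

Theorem mainTheorem13 :
  is_NA A_zero A_one A_plus A_neg A_ident A_conv A_comp /\
  ~ is_associative A_comp /\
  (exists (D : Type) (phi : Alg -> D -> D -> Prop),
      feeble_representation A_zero A_one A_plus A_neg A_ident A_conv A_comp phi) /\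
  (forall (D : Type) (phi : Alg -> D -> D -> Prop),
      ~ qualitative_representation A_zero A_one A_plus A_neg A_ident A_conv A_comp phi).
Proof.
split; first exact: A_is_NA.
split; first exact: A_not_associative.
split; first by exists bool, (label_rep bool_atom); exact: A_feeble_rep.
exact: A_no_qualitative_rep.
Qed.
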